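(* Let $f:\mathbb{R}^N\to\mathbb{R}^N$ be $C^1$ with equilibrium $x_\ast$, and fix $T>0$. Suppose there exist $\lambda_\ast>0$ and $n\in\mathbb{Z}$ with $\lambda_\ast\pm\frac{2\pi n i}{T}\in\sigma(f'(x_\ast))$. Let $K\in\mathbb{R}^{N\times N}$ (with arbitrary spectrum) satisfy $f'(x_\ast)K=Kf'(x_\ast)$. Then $\det(\lambda I-f'(x_\ast)-K[1-e^{-\lambda T}])=0$ has a root with $\mathrm{Re}\,\lambda>0$; in particular $x_\ast$ is unstable as a solution of $\dot x(t)=f(x(t))+K[x(t)-x(t-T)]$.
   Context: Eigenvalues of the linearized delay equation $\dot y(t)=f'(x_\ast)y(t)+K[y(t)-y(t-T)]$ are the roots of $\lambda\mapsto\det(\lambda I-f'(x_\ast)-K[1-e^{-\lambda T}])$. *)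

From HB Require Import structures.
From mathcomp Require Import all_boot all_order all_algebra.
From mathcomp Require Import all_classical all_reals all_analysis.
From mathcomp Require Import complex.
Set Implicit Arguments. Unset Strict Implicit. Unset Printing Implicit Defensive.
Import Order.TTheory GRing.Theory Num.Theory.
Import numFieldNormedType.Exports.
Local Open Scope ring_scope.
Local Open Scope complex_scope.

Definition cexp (R : realType) (z : R[i]) : R[i] :=
  (expR (complex.Re z) * cos (complex.Im z)) +i* (expR (complex.Re z) * sin (complex.Im z)).

(* Standard (column-convention) Jacobian matrix f'(x) of f : R^N -> R^N.
   MathComp-Analysis' 'J f x acts on row vectors (D_v f x = v *m 'J f x),
   so the usual Jacobian is its transpose. *)
Definition jac (R : realType) (N : nat) (f : 'rV[R]_N -> 'rV[R]_N) (x : 'rV[R]_N)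
  : 'M[R]_N := (jacobian f x)^T.

Definition C1 (R : realType) (N : nat) (f : 'rV[R]_N -> 'rV[R]_N) : Prop :=
  (forall x, differentiable f x) /\ continuous (jacobian f).

Definition cmx (R : realType) (N : nat) (A : 'M[R]_N) : 'M[R[i]]_N :=
  map_mx (fun r => r%:C) A.

Definition charfun (R : realType) (N : nat) (A K : 'M[R]_N) (T : R) (l : R[i]) : R[i] :=
  \det (l%:M - cmx A - (1 - cexp (- (l * T%:C))) *: cmx K).

From HB Require Import structures.
From mathcomp Require Import all_boot all_order all_algebra.
From mathcomp Require Import all_classical all_reals all_analysis.
From mathcomp Require Import complex.
From mathcomp Require Import ring lra spectral.
Import Order.TTheory GRing.Theory Num.Theory.
Import numFieldNormedType.Exports.
Set Implicit Arguments. Unset Strict Implicit. Unset Printing Implicit Defensive.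
Local Open Scope classical_set_scope.
Local Open Scope ring_scope.

(* Let A = f'(xs).  As A and K commute, the eigenspace of A for
   l0 = lams + 2 pi n i / T contains an eigenvector v of K, with eigenvalue mu
   say (common_eigenvector).  On v the characteristic matrix
   l I - A - (1 - e^{-lT}) K acts as the scalar l - l0 - (1 - e^{-lT}) mu, so
   it suffices to find a root with Re l > 0 of that scalar equation
   (scalar_char_root).  Writing mu T = rho e^{i al} and
   l T = x + i (2 pi n + phi + al), the scalar equation becomes the real system
        phi - rho e^{-x} sin phi = rho sin al - al =: c,
        x + rho e^{-x} cos phi  = lams T + rho cos al =: K,
   to be solved with x > 0 (polar_system_solvable).  By 2pi-periodicity and the
   symmetry al |-> -al we may assume 0 <= c <= pi.  Eliminating
   e^{-x} = (phi - c) / (rho sin phi) leaves one equation E phi = 0, solved by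
   the intermediate value theorem on an arc [a, p] ending at the first root p
   of rho sin y = y - c; the sign of E at p comes from the key comparison
   cos p <= cos al (first_gap_root_cos_min), a consequence of the concavity of
   sin on [0, pi].  The boundary cases c = 0 and c = pi use phi = 0 or pi. *)

Section RealFacts.
Variable R : realType.
Implicit Types x y z : R.

Lemma gt_near_continuous (h : R -> R) z y0 : {for z, continuous h} -> y0 < h z ->
  exists2 d : R, 0 < d & forall w, `|z - w| < d -> y0 < h w.
Proof.
move=> hc hz.
have [d /= d0 H] := (iffLR (nbhs_ballP _ _)) (cvgr_gt (f := h) (h z) hc _ hz).
by exists d => // w zw; apply: H.
Qed.

(* A continuous h going from positive to negative on [a, b] has a FIRST zero
   there: the infimum of {y in [a, b] | h y <= 0}. *)
Lemma first_zero (h : R -> R) a b : continuous h -> a < b -> 0 < h a -> h b < 0 ->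
  exists z, [/\ a < z, z < b, h z = 0 & forall y, a <= y -> y < z -> 0 < h y].
Proof.
move=> hc ab ha hb.
pose S : set R := fun y => a <= y <= b /\ h y <= 0.
have Sb : S b by split; [rewrite (ltW ab) lexx | exact: ltW].
have lbS : lbound S a by move=> y [/andP[]].
have hlb : has_lbound S by exists a.
have hinf : has_inf S by split; [exists b | ].
set z := inf S.
have az : a <= z := lb_le_inf (ex_intro _ b Sb) lbS.
have zle y : S y -> z <= y by exact: (ge_inf hlb).
have zb : z <= b := zle _ Sb.
have pos y : a <= y -> y < z -> 0 < h y.
  move=> ay yz; rewrite ltNge; apply/negP => hy0.
  have: z <= y by apply: zle; split => //; rewrite ay /= ltW // (lt_le_trans yz zb).
  by rewrite leNgt yz.
have hz_le0 : h z <= 0.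
  rewrite leNgt; apply/negP => hz.
  have [d d0 H] := gt_near_continuous (hc z) hz.
  have [y Sy yd] := inf_adherent d0 hinf.
  have zy := zle _ Sy; case: Sy => /andP[ay yb] hy.
  have : 0 < h y by apply: H; rewrite distrC ger0_norm ?subr_ge0 //; lra.
  by rewrite ltNge hy.
have az' : a < z.
  by rewrite lt_neqAle az andbT; apply: contraTneq hz_le0 => <-; rewrite -ltNge.
have hz_ge0 : 0 <= h z.
  rewrite leNgt; apply/negP => hz.
  have hNc : {for z, continuous (fun w => - h w)} by apply: cvgN; exact: hc.
  have [d d0 H] := gt_near_continuous hNc (ltac:(lra) : 0 < - h z).
  pose y := Num.max a (z - d / 2).
  have yz : y < z by rewrite gt_max az' /=; lra.
  have : 0 < - h y.
    apply: H; rewrite ger0_norm ?subr_ge0 ?ltW //.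
    have : z - d / 2 <= y by rewrite le_max lexx orbT.
    lra.
  by have := pos y (ltac:(by rewrite le_max lexx) : a <= y) yz; lra.
have hz : h z = 0 by apply/eqP; rewrite eq_le hz_le0 hz_ge0.
exists z; split => //.
by rewrite lt_neqAle zb andbT; apply: contraTneq hb => <-; rewrite hz ltxx.
Qed.

(* Concavity of sin on [0, pi], stated as an inequality between chord slopes
   (two applications of the mean value theorem, cos being decreasing). *)
Lemma sin_chord_slopes x y z : 0 <= x -> x < y -> y < z -> z <= pi ->
  (sin z - sin y) * (y - x) <= (sin y - sin x) * (z - y).
Proof.
move=> x0 xy yz zpi.
have sin_cont a b : {within `[a, b], continuous (@sin R)}.
  by apply: continuous_subspaceT; exact: continuous_sin.
have [c1 c1in e1] := MVT xy (fun t _ => is_derive_sin t) (sin_cont x y).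
have [c2 c2in e2] := MVT yz (fun t _ => is_derive_sin t) (sin_cont y z).
move: c1in c2in; rewrite !in_itv /= => /andP[xc1 c1y] /andP[yc2 c2z].
have cos_lt : cos c2 < cos c1 by rewrite ltr_cos ?in_itv /=; try (apply/andP; split); lra.
rewrite e1 e2 -subr_ge0.
have -> : cos c1 * (y - x) * (z - y) - cos c2 * (z - y) * (y - x) =
  (cos c1 - cos c2) * ((y - x) * (z - y)) by ring.
by apply: mulr_ge0; [lra | apply: mulr_ge0; lra].
Qed.

(* By concavity, on [c, p] inside [0, pi] sin stays above its smaller
   endpoint value. *)
Lemma sin_ge_min_endpoints (c p a : R) : 0 <= c -> c < a -> a < p -> p <= pi ->
  Num.min (sin c) (sin p) <= sin a.
Proof.
move=> c0 ca ap ppi.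
have chord := sin_chord_slopes c0 ca ap ppi.
set m := Num.min (sin c) (sin p).
have mc : m <= sin c by rewrite /m ge_min lexx.
have mp : m <= sin p by rewrite /m ge_min lexx orbT.
suff : m * (p - c) <= sin a * (p - c) by rewrite ler_pM2r // subr_gt0 (lt_trans ca ap).
have interp : sin c * (p - a) + sin p * (a - c) <= sin a * (p - c).
  have -> : sin a * (p - c) = sin c * (p - a) + sin p * (a - c) +
    ((sin a - sin c) * (p - a) - (sin p - sin a) * (a - c)) by ring.
  by rewrite lerDl subr_ge0.
have : m * (p - a) + m * (a - c) <= sin c * (p - a) + sin p * (a - c).
  by apply: lerD; apply: ler_wpM2r => //; rewrite subr_ge0 ltW.
have -> : m * (p - a) + m * (a - c) = m * (p - c) by ring.
by move=> /le_trans; apply.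
Qed.

Lemma cos_le0_pihalf_pi x : pi / 2 <= x -> x <= pi -> cos x <= 0.
Proof.
move=> h1 h2; have -> : x = (x - pi / 2) + pi / 2 by ring.
by rewrite cosDpihalf oppr_le0; apply: sin_ge0_pi; apply/andP; split; lra.
Qed.

Lemma cos_le_anti x y : 0 <= x -> x <= y -> y <= pi -> cos y <= cos x.
Proof.
move=> x0 xy ypi; have [->|xy'] := eqVneq x y; first exact: lexx.
by apply: ltW; rewrite ltr_cos ?in_itv /=; try (apply/andP; split); lra.
Qed.

Lemma sin_mvt (a : R) : 0 < a -> exists2 xi, 0 < xi < a & sin a = cos xi * a.
Proof.
move=> a0.
have sin_cont : {within `[0, a], continuous (@sin R)}.
  by apply: continuous_subspaceT; exact: continuous_sin.
have [xi xin e] := MVT a0 (fun t _ => is_derive_sin t) sin_cont.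
by exists xi; [move: xin; rewrite in_itv | move: e; rewrite sin0 !subr0].
Qed.

Lemma sin_lt_self (a : R) : 0 < a -> sin a < a.
Proof.
move=> a0; have [api|api] := lerP a pi; last first.
  by have := sin_le1 a; have := pi_ge2 R; lra.
have [xi /andP[x0 xa] ->] := sin_mvt a0.
have : cos xi < 1 by rewrite -cos0 ltr_cos ?in_itv /=; try (apply/andP; split); lra.
by move=> h; rewrite -[ltRHS]mul1r ltr_pM2r.
Qed.

Lemma periodic_int (f : R -> R) (x : R) (k : int) : periodic f (pi *+ 2) ->
  f (x + 2 * pi * k%:~R) = f x.
Proof.
move=> pf; case: k => n.
  have -> : 2 * (pi : R) * (Posz n)%:~R = pi *+ 2 *+ n.
    rewrite -mulrnA -[RHS]mulr_natr natrM.
    by change ((Posz n)%:~R) with (n%:R : R); ring.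
  exact: periodicn.
have -> : 2 * (pi : R) * (Negz n)%:~R = - (pi *+ 2 *+ n.+1).
  rewrite NegzE mulrNz -mulrnA -[in RHS]mulr_natr natrM.
  by change ((Posz n.+1)%:~R) with (n.+1%:R : R); ring.
by have := periodicn pf n.+1 (x - pi *+ 2 *+ n.+1); rewrite subrK => ->.
Qed.

Lemma polar_form (a b : R) : (a != 0) || (b != 0) ->
  exists rho al, [/\ 0 < rho, a = rho * cos al & b = rho * sin al].
Proof.
move=> nz.
have sq_pos (u : R) : u != 0 -> 0 < u ^+ 2 by move=> u0; rewrite exprn_even_gt0.
have q0 : 0 < a ^+ 2 + b ^+ 2.
  by case/orP: nz => /sq_pos h; [have := sqr_ge0 b | have := sqr_ge0 a]; lra.
pose rho := Num.sqrt (a ^+ 2 + b ^+ 2).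
have r0 : 0 < rho by rewrite sqrtr_gt0.
have r2 : rho ^+ 2 = a ^+ 2 + b ^+ 2 by rewrite sqr_sqrtr // ltW.
clearbody rho.
have ab : -1 <= a / rho <= 1.
  rewrite ler_pdivrMr // ler_pdivlMr // mul1r mulN1r.
  by have := sqr_ge0 b; rewrite !expr2 in r2 * => hb; apply/andP; split; nra.
pose al0 := acos (a / rho).
have c0 : cos al0 = a / rho by rewrite /al0 acosK // in_itv /=.
have s0 : rho * sin al0 = `|b|.
  rewrite /al0 sin_acos //.
  have -> : 1 - (a / rho) ^+ 2 = (b / rho) ^+ 2.
    by apply/eqP; rewrite -subr_eq0; apply/eqP; field: r2 => //; rewrite gt_eqF.
  have ir : 0 < rho^-1 by rewrite invr_gt0.
  by rewrite sqrtr_sqr normrM (gtr0_norm ir); field; rewrite gt_eqF.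
have ca : a = rho * cos al0 by rewrite c0; field; rewrite gt_eqF.
have [bp|bn] := lerP 0 b; first by exists rho, al0; rewrite s0 ger0_norm.
exists rho, (- al0); split => //; first by rewrite cosN.
by rewrite sinN mulrN s0 ltr0_norm // opprK.
Qed.

(* x |-> x + C e^{-x} is continuous and tends to +oo, so it reaches every
   level K above its value at x0 >= 0; the root is positive unless it is x0 = 0. *)
Lemma x_plus_Cexp_root (C K x0 : R) : 0 <= x0 -> x0 + C * expR (- x0) <= K ->
  (0 < x0 \/ x0 + C * expR (- x0) < K) ->
  exists2 x, 0 < x & x + C * expR (- x) = K.
Proof.
move=> x00 hle hor.
pose l x := x + C * expR (- x).
pose b := x0 + `|K| + `|C| + 1.
have l_cont : continuous l.
  move=> x; apply: cvgD; first exact: cvg_id.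
  apply: cvgM; first exact: cvg_cst.
  apply: (continuous_comp (f := fun x => - x)); first by apply: cvgN; exact: cvg_id.
  exact: continuous_expR.
have nK := normr_ge0 K; have nC := normr_ge0 C.
have xb : x0 <= b by rewrite /b; lra.
have lb : K <= l b.
  have e1 : expR (- b) <= 1 by rewrite -expR0 ler_expR /b; lra.
  have e2 : 0 < expR (- b) := expR_gt0 _.
  have : `|C * expR (- b)| <= `|C| by rewrite normrM (gtr0_norm e2) ler_piMr.
  have := ler_norm (- (C * expR (- b))); have := ler_norm K.
  by rewrite normrN /l /b; lra.
have [x xin ex] : exists2 x, x \in `[x0, b] & l x = K.
  apply: IVT => //; first by apply: continuous_subspaceT.
  by rewrite ge_min le_max; apply/andP; split; apply/orP; [left|right].
move: xin; rewrite in_itv /= => /andP[x0x xb'].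
exists x => //; case: hor => h; first lra.
have : x != x0 by apply: contraTneq h => <-; rewrite -/(l x) ex ltxx.
by rewrite neq_lt ltNge x0x /=; lra.
Qed.

(* For rho <= 1 the only solution of rho sin al = al is al = 0, as |sin y| < |y|. *)
Lemma sin_fixed_point_small (rho al : R) : 0 < rho -> rho <= 1 -> rho * sin al = al ->
  al = 0.
Proof.
move=> r0 r1 e.
have no_pos y : 0 < y -> rho * sin y = y -> False.
  move=> y0 ey; have sy : 0 < sin y by rewrite -(pmulr_rgt0 _ r0) ey.
  have : rho * sin y <= sin y by rewrite ler_piMl // ltW.
  by have := sin_lt_self y0; lra.
have [al0|al0|//] := ltrgtP al 0; last by case: (no_pos al al0 e).
by case: (no_pos (- al)); [lra | rewrite sinN mulrN e].
Qed.

(* Concavity of sin: if a < rho sin a with 0 < a <= pi, the same holds on (0, a]. *)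
Lemma sin_above_diagonal (rho a y : R) : 0 < rho -> 0 < a -> a <= pi ->
  a < rho * sin a -> 0 < y -> y <= a -> y < rho * sin y.
Proof.
move=> r0 a0 api ha y0; rewrite le_eqVlt => /orP[/eqP -> //|ya].
have := sin_chord_slopes (lexx 0) y0 ya api; rewrite sin0 !subr0 => chord.
have h1 : sin a * y <= sin y * a by rewrite mulrBl mulrBr in chord; lra.
have h2 : a * y < rho * sin a * y by rewrite ltr_pM2r.
have h3 : rho * sin a * y <= rho * sin y * a.
  by rewrite -mulrA -[X in _ <= X]mulrA ler_pM2l.
by rewrite -(ltr_pM2r a0); lra.
Qed.

(* For 0 < g < 1, a = acos g lies in (0, pi/2), with cos a = g and
   a g <= sin a (mean value theorem, cos >= g on [0, a]). *)
Lemma acos_sin_lower (g : R) : 0 < g -> g < 1 ->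
  exists a, [/\ 0 < a, a < pi / 2, cos a = g & a * g <= sin a].
Proof.
move=> g0 g1; have g_itv : -1 <= g <= 1 by apply/andP; lra.
have ca : cos (acos g) = g by rewrite acosK // in_itv.
have a0 : 0 < acos g by rewrite acos_gt0 //; apply/andP; lra.
have api : acos g <= pi by rewrite acos_lepi.
have a_pihalf : acos g < pi / 2.
  by rewrite ltNge; apply/negP => h; have := cos_le0_pihalf_pi h api; lra.
exists (acos g); split => //.
have [xi /andP[xi0 xia] ->] := sin_mvt a0.
by rewrite mulrC ler_pM2r // -ca; apply: cos_le_anti; lra.
Qed.

(* Close to 1, g satisfies both rho g > 1 (for rho > 1) and L < ln g + g
   (for L < 1 = ln 1 + 1), by continuity of ln g + g at 1. *)
Lemma near_one_choice (rho L : R) : 1 < rho -> L < 1 ->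
  exists g, [/\ 0 < g, g < 1, 1 < rho * g & L < ln g + g].
Proof.
move=> r1 L1; have r0 : 0 < rho by lra.
have cont : {for 1, continuous (fun g : R => ln g + g)}.
  by apply: cvgD; [apply: continuous_ln; lra | exact: cvg_id].
have [d d0 near1] := gt_near_continuous cont (ltac:(rewrite ln1; lra) : L < ln 1 + 1).
have ir : rho * rho^-1 = 1 by rewrite divff // gt_eqF.
have ir1 : rho^-1 < 1 by rewrite invf_lt1.
have ir0 : 0 < rho^-1 by rewrite invr_gt0.
pose e := Num.min (d / 2) ((1 - rho^-1) / 2).
have e0 : 0 < e by rewrite lt_min; apply/andP; lra.
have e1 : e <= d / 2 by rewrite ge_min lexx.
have e2 : e <= (1 - rho^-1) / 2 by rewrite ge_min lexx orbT.
exists (1 - e); split; [lra | lra | | by apply: near1; rewrite opprB addrC subrK ger0_norm; lra].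
have : rho * rho^-1 < rho * (1 - e) by rewrite ltr_pM2l //; lra.
lra.
Qed.

End RealFacts.

Section DelaySystem.
Variable R : realType.

(* Real form of the scalar characteristic equation, in polar coordinates:
   a solution with 0 < x of
     phi - rho e^{-x} sin phi = rho sin al - al,  x + rho e^{-x} cos phi = s + rho cos al. *)
Definition polar_system_solvable (rho s al : R) : Prop := exists x phi, [/\ 0 < x,
  phi - rho * expR (- x) * sin phi = rho * sin al - al &
  x + rho * expR (- x) * cos phi = s + rho * cos al].

(* The signed gap y |-> rho sin y - y + c, whose zeros are the phi solving the
   first equation with e^{-x} = 1. *)
Definition sine_gap (rho c y : R) : R := rho * sin y - y + c.

Lemma sine_gap_continuous (rho c : R) : continuous (sine_gap rho c).
Proof.
move=> y; apply: cvgD; last exact: cvg_cst.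
apply: cvgB; last exact: cvg_id.
by apply: cvgM; [exact: cvg_cst | exact: continuous_sin].
Qed.

(* Eliminating x: where sin phi > 0 the first equation forces
   e^{-x} = damping rho c phi. *)
Definition damping (rho c y : R) : R := (y - c) / (rho * sin y).

Lemma damping_continuous (rho c y : R) : 0 < rho -> 0 < sin y ->
  {for y, continuous (damping rho c)}.
Proof.
move=> r0 sy; apply: continuousM; first by apply: cvgB; [exact: cvg_id | exact: cvg_cst].
apply: continuousV; first by rewrite /= gt_eqF // mulr_gt0.
by apply: cvgM; [exact: cvg_cst | exact: continuous_sin].
Qed.

(* After elimination the second equation reads E phi = 0 with
   E phi = - ln (damping phi) + rho (damping phi) cos phi - K.  On an arc [a, b]
   of (0, pi) where damping < 1 except at a root b of the gap, E changes sign
   as soon as E a > 0 and rho cos b < K; the intermediate value theorem then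
   yields a solution with x = - ln (damping phi) > 0. *)
Lemma solve_by_elimination (rho c K a b : R) :
  0 < rho -> c < a -> a < b -> 0 < a -> b < pi ->
  (forall y, a <= y -> y < b -> y - c < rho * sin y) -> sine_gap rho c b = 0 ->
  rho * cos b < K ->
  0 < - ln (damping rho c a) + rho * damping rho c a * cos a - K ->
  exists x phi, [/\ 0 < x, phi - rho * expR (- x) * sin phi = c &
                   x + rho * expR (- x) * cos phi = K].
Proof.
move=> r0 ca ab a0 bpi below broot hK Ea.
pose t := damping rho c.
pose E y := - ln (t y) + rho * t y * cos y - K.
have sin_pos y : a <= y -> y <= b -> 0 < sin y.
  by move=> ay yb; apply: sin_gt0_pi; apply/andP; split; lra.
have t_pos y : a <= y -> y <= b -> 0 < t y.
  move=> ay yb; apply: divr_gt0; first lra.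
  by apply: mulr_gt0 => //; exact: sin_pos.
have E_cont y : a <= y -> y <= b -> {for y, continuous E}.
  move=> ay yb; have ty := @damping_continuous rho c y r0 (sin_pos y ay yb).
  apply: cvgB; last exact: cvg_cst.
  apply: cvgD.
    by apply: cvgN; apply: (continuous_comp ty); apply: continuous_ln; exact: t_pos.
  apply: cvgM; last exact: continuous_cos.
  by apply: cvgM; [exact: cvg_cst | exact: ty].
have hb : rho * sin b = b - c by move: broot; rewrite /sine_gap; lra.
have tb : t b = 1.
  by rewrite /t /damping -hb divff // gt_eqF // mulr_gt0 // sin_pos; lra.
have Eb : E b < 0 by rewrite /E tb ln1 mulr1; lra.
have {}Ea : 0 < E a := Ea.
have [y yin Ey] : exists2 y, y \in `[a, b] & E y = 0.
  apply: IVT; first exact: ltW.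
    by apply: continuous_in_subspaceT => y; rewrite inE /= in_itv /= => /andP[]; exact: E_cont.
  by rewrite ge_min le_max; apply/andP; split; apply/orP; [right|left]; lra.
move: yin; rewrite in_itv /= => /andP[ay yb].
have yb' : y < b by rewrite lt_neqAle yb andbT; apply: contraTneq Eb => <-; rewrite Ey ltxx.
have ty := t_pos y ay yb; have sy := sin_pos y ay yb.
have ty1 : t y < 1 by rewrite /t /damping ltr_pdivrMr ?mul1r ?mulr_gt0 //; exact: below.
exists (- ln (t y)), y; rewrite opprK lnK ?posrE //; split.
- by rewrite oppr_gt0 ln_lt0 // ty ty1.
- have -> : rho * t y * sin y = y - c by rewrite /t /damping; field; rewrite !gt_eqF.
  lra.
- by move: Ey; rewrite /E; lra.
Qed.

(* Concavity of sin: once the gap has vanished at p after being positive at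
   y0 < p, it stays negative on (p, pi]. *)
Lemma sine_gap_neg_after (rho c y0 p x : R) :
  0 < rho -> 0 <= y0 -> y0 < p -> p < x -> x <= pi ->
  0 < sine_gap rho c y0 -> sine_gap rho c p = 0 -> sine_gap rho c x < 0.
Proof.
rewrite /sine_gap => r0 y00 y0p px xpi hy0 hp.
have chord : rho * ((sin x - sin p) * (p - y0)) <= rho * ((sin p - sin y0) * (x - p)).
  by rewrite ler_pM2l //; exact: sin_chord_slopes.
have H : (rho * sin x - x + c) * (p - y0) <= - (rho * sin y0 - y0 + c) * (x - p).
  have -> : (rho * sin x - x + c) * (p - y0) = rho * ((sin x - sin p) * (p - y0))
    + (rho * sin p - p + c) * (p - y0) - (x - p) * (p - y0) by ring.
  have -> : - (rho * sin y0 - y0 + c) * (x - p) = rho * ((sin p - sin y0) * (x - p))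
    - (rho * sin p - p + c) * (x - p) - (p - y0) * (x - p) by ring.
  by rewrite hp !mul0r; lra.
have : - (rho * sin y0 - y0 + c) * (x - p) < 0.
  by rewrite mulNr oppr_lt0; apply: mulr_gt0; lra.
have : 0 < p - y0 by lra.
by move=> py0 neg; rewrite -(pmulr_llt0 _ py0); lra.
Qed.

(* At a root r of rho sin r = r - c, (rho cos r)^2 = rho^2 - (r - c)^2; so
   among roots, a larger |r - c| means a smaller |cos r|. *)
Lemma root_cos_le (rho c p r : R) : 0 < rho ->
  rho * sin p = p - c -> rho * sin r = r - c ->
  cos p <= 0 -> (p - c) ^+ 2 <= (r - c) ^+ 2 -> cos p <= cos r.
Proof.
move=> r0 ep er cp le.
have root_cos2 y : rho * sin y = y - c -> (rho * cos y) ^+ 2 = rho ^+ 2 - (y - c) ^+ 2.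
  move=> <-; rewrite -[in RHS](mulr1 (rho ^+ 2)) -(cos2Dsin2 y); ring.
rewrite leNgt; apply/negP => lt.
have : (rho * cos p) ^+ 2 < (rho * cos r) ^+ 2.
  rewrite -subr_gt0.
  have -> : (rho * cos r) ^+ 2 - (rho * cos p) ^+ 2 =
    (rho ^+ 2) * ((cos p - cos r) * (- cos p - cos r)) by ring.
  by apply: mulr_gt0; [rewrite exprn_gt0 | apply: mulr_gt0; lra].
by rewrite (root_cos2 _ ep) (root_cos2 _ er); lra.
Qed.

Definition first_gap_root (rho c p : R) : Prop :=
  [/\ 0 < rho, 0 <= c < p, p < pi, rho * sin p = p - c &
      forall y, 0 < y -> y < p -> y - c < rho * sin y].

Lemma first_gap_root_le (rho c p r : R) : first_gap_root rho c p ->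
  0 < r -> rho * sin r = r - c -> p <= r.
Proof.
case=> _ _ _ _ below r0 er; rewrite leNgt; apply/negP => rp.
by have := below r r0 rp; lra.
Qed.

(* The key comparison, case cos p <= 0: every other root is at least as far
   from c as p, hence has a cosine at least cos p. *)
Lemma first_gap_root_cos_min_nonpos (rho c p r : R) : first_gap_root rho c p ->
  cos p <= 0 -> rho * sin r = r - c -> cos p <= cos r.
Proof.
move=> fr; case: (fr) => r0 /andP[c0 cp] ppi p_root below cn er; have pi0 := pi_gt0 R.
have [rn|rp] := ltrP r 0; last first.
  have [->|rne] := eqVneq r 0; first by rewrite cos0 (le_trans cn).
  have pr : p <= r by apply: (first_gap_root_le fr) => //; rewrite lt_neqAle eq_sym rne.
  apply: (root_cos_le r0 p_root er cn); rewrite -subr_ge0.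
  have -> : (r - c) ^+ 2 - (p - c) ^+ 2 = (r - p) * (r + p - 2 * c) by ring.
  by apply: mulr_ge0; lra.
have [crp|crn] := lerP 0 (cos r); first exact: le_trans crp.
have rle : r <= - (pi / 2).
  rewrite leNgt; apply/negP => h.
  have : 0 < cos r by apply: cos_gt0_pihalf; apply/andP; split; lra.
  lra.
(* the mirror point 2c - r lies beyond p: otherwise the gap there would be
   positive, while it equals 2 rho cos (c - r) sin c <= 0 *)
have mirror : p <= 2 * c - r.
  rewrite leNgt; apply/negP => h.
  have H := below (2 * c - r) ltac:(lra) h.
  have csr : cos (c - r) <= 0 by apply: cos_le0_pihalf_pi; lra.
  have sc : 0 <= sin c by apply: sin_ge0_pi; apply/andP; split; lra.
  have : rho * sin (2 * c - r) - (2 * c - r) = 2 * rho * cos (c - r) * sin c - c.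
    have e2 : rho * (sin (c - r) * cos c - cos (c - r) * sin c) = c - r.
      rewrite -sinB; have -> : c - r - c = - r by ring.
      by rewrite sinN mulrN er; ring.
    rewrite (_ : 2 * c - r = (c - r) + c); last by ring.
    rewrite sinD.
    transitivity (rho * (sin (c - r) * cos c - cos (c - r) * sin c)
      + 2 * rho * cos (c - r) * sin c - ((c - r) + c)); first by ring.
    by rewrite e2; ring.
  have : 0 <= rho * (- cos (c - r)) * sin c by apply: mulr_ge0 => //; apply: mulr_ge0; lra.
  lra.
apply: (root_cos_le r0 p_root er cn); rewrite -subr_ge0.
have -> : (r - c) ^+ 2 - (p - c) ^+ 2 = (c - r - (p - c)) * (c - r + (p - c)) by ring.
by apply: mulr_ge0; lra.
Qed.

(* Case cos p > 0: then p < pi/2, and concavity confines every root to [-p, p]. *)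
Lemma first_gap_root_cos_min_pos (rho c p r : R) : first_gap_root rho c p ->
  0 < cos p -> rho * sin r = r - c -> cos p <= cos r.
Proof.
move=> fr; case: (fr) => r0 /andP[c0 cp] ppi p_root below cpos er; have pi0 := pi_gt0 R.
have p_lt_pihalf : p < pi / 2.
  rewrite ltNge; apply/negP => h.
  have : cos p <= 0 by apply: cos_le0_pihalf_pi; lra.
  lra.
have gap_neg x : p < x -> x <= pi -> sine_gap rho c x < 0.
  move=> px xpi; apply: (@sine_gap_neg_after rho c (p / 2) p x) => //; try lra.
    by have := below (p / 2) ltac:(lra) ltac:(lra); rewrite /sine_gap; lra.
  by rewrite /sine_gap p_root; ring.
have rho_lt : rho < pi / 2 - c.
  by have := gap_neg (pi / 2) p_lt_pihalf ltac:(lra); rewrite /sine_gap sin_pihalf; lra.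
have [rn|rp] := ltrP r 0; last first.
  have [->|rne] := eqVneq r 0; first by rewrite cos0 cos_le1.
  have pr : p <= r by apply: (first_gap_root_le fr) => //; rewrite lt_neqAle eq_sym rne.
  have [->|pr'] := eqVneq p r; first exact: lexx.
  have [rpi|rpi] := lerP r pi.
    by have := gap_neg r ltac:(by rewrite lt_neqAle pr' pr) rpi; rewrite /sine_gap; lra.
  have : rho * sin r <= rho by rewrite ler_piMr ?sin_le1 // ltW.
  lra.
have ep : rho * sin (- r) = - r + c by rewrite sinN mulrN er; ring.
have sr_le : rho * sin (- r) <= rho by rewrite ler_piMr ?sin_le1 // ltW.
have pl : - r <= p.
  rewrite leNgt; apply/negP => h.
  by have := gap_neg (- r) h ltac:(lra); rewrite /sine_gap; lra.
by rewrite -(cosN r); apply: cos_le_anti; lra.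
Qed.

Lemma first_gap_root_cos_min (rho c p r : R) : first_gap_root rho c p ->
  rho * sin r = r - c -> cos p <= cos r.
Proof.
move=> fr; have [/(first_gap_root_cos_min_nonpos fr)|/(first_gap_root_cos_min_pos fr)] :=
  lerP (cos p) 0; exact.
Qed.


Lemma damping_small_near (rho c p eps : R) : 0 < rho -> 0 < c -> c < p -> p < pi ->
  0 < eps -> exists a, [/\ c < a, a < p, 0 < damping rho c a & damping rho c a <= eps].
Proof.
move=> r0 c0 cp ppi eps0.
have sin_pos y : 0 < y -> y < pi -> 0 < sin y by move=> *; apply: sin_gt0_pi; apply/andP.
pose m := Num.min (sin c) (sin p).
have m0 : 0 < m by rewrite lt_min !sin_pos //; lra.
pose d := Num.min ((p - c) / 2) (rho * m * eps / 2).
have d0 : 0 < d by rewrite lt_min; apply/andP; split; [lra | rewrite !mulr_gt0].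
have d1 : d <= (p - c) / 2 by rewrite ge_min lexx.
have d2 : d <= rho * m * eps / 2 by rewrite ge_min lexx orbT.
have sa : m <= sin (c + d) by apply: sin_ge_min_endpoints; lra.
exists (c + d); rewrite /damping addrAC subrr add0r; split; [lra | lra | |].
  by rewrite divr_gt0 // mulr_gt0 //; lra.
rewrite ler_pdivrMr ?mulr_gt0 //; last by lra.
have : rho * m * eps <= rho * sin (c + d) * eps by rewrite ler_pM2r // ler_pM2l.
lra.
Qed.

(* When the damping t is tiny, - ln t dominates the eliminated second equation. *)
Lemma elimination_pos_small_damping (rho K t y : R) : 0 < rho -> 0 < t ->
  t <= expR (- (rho + `|K| + 1)) -> 0 < - ln t + rho * t * cos y - K.
Proof.
move=> r0 t0 small.
have nK := normr_ge0 K; have := ler_norm K => Kle.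
have lnt : ln t <= - (rho + `|K| + 1) by rewrite -ler_expR lnK ?posrE.
have t1 : t <= 1.
  have : expR (- (rho + `|K| + 1)) <= expR 0 by rewrite ler_expR; lra.
  by rewrite expR0; lra.
have : - (rho * t) <= rho * t * cos y.
  have : 0 <= rho * t * (cos y + 1).
    by apply: mulr_ge0; [rewrite mulr_ge0 ?ltW | have := cos_geN1 y; lra].
  by rewrite mulrDr mulr1; lra.
have : rho * t <= rho by rewrite ler_piMr // ltW.
lra.
Qed.

Lemma first_gap_root_exists (rho c a : R) : 0 < rho -> 0 <= c -> c <= a -> 0 < a ->
  a < pi -> (forall y, 0 < y -> y <= a -> y - c < rho * sin y) ->
  exists2 p, a < p & first_gap_root rho c p.
Proof.
move=> r0 c0 ca a0 api below_a.
have gap_a : 0 < sine_gap rho c a by have := below_a a a0 (lexx a); rewrite /sine_gap; lra.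
have gap_pi : sine_gap rho c pi < 0 by rewrite /sine_gap sinpi mulr0 sub0r; lra.
have [p [ap ppi proot gap_pos]] := first_zero (@sine_gap_continuous rho c) api gap_a gap_pi.
exists p => //; split; rewrite ?c0 ?(le_lt_trans ca ap) //.
  by move: proot; rewrite /sine_gap; lra.
move=> y y0 yp; have [ya|ay] := lerP y a; first exact: below_a.
by have := gap_pos y (ltW ay) yp; rewrite /sine_gap; lra.
Qed.

(* Conclusion of the elimination argument: -al is a root of the gap for
   c = rho sin al - al, so the first root p has rho cos p <= rho cos al < K, and
   any a in (c, p) with E a > 0 yields a solution. *)
Lemma polar_system_from_first_root (rho s al p a : R) :
  let c := rho * sin al - al in
  0 < s -> first_gap_root rho c p -> c < a -> 0 < a -> a < p ->
  0 < - ln (damping rho c a) + rho * damping rho c a * cos a - (s + rho * cos al) ->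
  polar_system_solvable rho s al.
Proof.
move=> c s0 fr ca a0 ap Ea; case: (fr) => r0 _ ppi proot below.
have cos_le : cos p <= cos (- al).
  by apply: (first_gap_root_cos_min fr); rewrite sinN /c; ring.
apply: (solve_by_elimination r0 ca ap a0 ppi _ _ _ Ea).
- by move=> y ay yp; apply: below => //; lra.
- by rewrite /sine_gap proot; ring.
- by move: cos_le; rewrite cosN -(ler_pM2l r0); lra.
Qed.

(* Generic case 0 < c < pi: the gap is positive on (0, c], and the damping can
   be made arbitrarily small just right of c, which makes E positive there. *)
Lemma polar_system_interior (rho s al : R) : 0 < rho -> 0 < s ->
  0 < rho * sin al - al < pi -> polar_system_solvable rho s al.
Proof.
set c := rho * sin al - al; set K := s + rho * cos al.
move=> r0 s0 /andP[c0 cpi].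
have below_c y : 0 < y -> y <= c -> y - c < rho * sin y.
  move=> y0 yc; have : 0 < rho * sin y by rewrite mulr_gt0 // sin_gt0_pi //; apply/andP; lra.
  lra.
have [p cp fr] := first_gap_root_exists r0 (ltW c0) (lexx c) c0 cpi below_c.
have [_ _ ppi _ _] := fr.
have [a [ca ap ta_pos ta_small]] :=
  damping_small_near r0 c0 cp ppi (expR_gt0 (- (rho + `|K| + 1))).
apply: (polar_system_from_first_root s0 fr ca _ ap); first lra.
exact: elimination_pos_small_damping.
Qed.

(* Boundary case c = pi: take phi = pi; then x - rho e^{-x} = K has a positive
   root since K >= s - rho > - rho. *)
Lemma polar_system_c_pi (rho s al : R) : 0 < rho -> 0 < s ->
  rho * sin al - al = pi -> polar_system_solvable rho s al.
Proof.
move=> r0 s0 c_pi; have := cos_geN1 al => cos_ge.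
have at0 : 0 + - rho * expR (- 0) = - rho by rewrite oppr0 expR0 mulr1 add0r.
have [x x0 ex] := @x_plus_Cexp_root R (- rho) (s + rho * cos al) 0 (lexx 0)
  ltac:(rewrite at0; nra) ltac:(right; rewrite at0; nra).
exists x, pi; split => //; first by rewrite sinpi mulr0 subr0 c_pi.
by rewrite cospi mulrN1; move: ex; rewrite mulNr.
Qed.

(* Case c = 0 with rho > 1 and K < ln rho + 1.  As phi -> 0+ the damping
   phi/(rho sin phi) tends to 1/rho and E to ln rho + 1 - K > 0; quantitatively,
   at a = acos g the damping is u/rho with 1 <= u <= 1/g, so
   E a >= ln rho + ln g + g - K, which is positive for g close to 1. *)
Lemma polar_system_c_zero_large_rho (rho s al : R) : 1 < rho -> 0 < s ->
  rho * sin al - al = 0 -> s + rho * cos al < ln rho + 1 ->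
  polar_system_solvable rho s al.
Proof.
set K := s + rho * cos al.
move=> r1 s0 c0 hK; have r0 : 0 < rho by lra; have pi0 := pi_gt0 R.
have [g [g0 g1 rg lng]] := near_one_choice r1 (ltac:(lra) : K - ln rho < 1).
have [a [a0 a_pihalf ca sa]] := acos_sin_lower g0 g1.
have a_lt : a < rho * sin a.
  have : a * 1 < a * (rho * g) by rewrite ltr_pM2l.
  have : rho * (a * g) <= rho * sin a by rewrite ler_pM2l.
  lra.
have [p ap fr] : exists2 p, a < p & first_gap_root rho 0 p.
  apply: first_gap_root_exists; rewrite ?lexx ?ltW //; first lra.
  by move=> y y0 ya; rewrite subr0; apply: (sin_above_diagonal r0 a0 _ a_lt); lra.
rewrite -c0 in fr; apply: (polar_system_from_first_root s0 fr _ a0 ap); first by rewrite c0.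
have sa0 : 0 < sin a by have := mulr_gt0 a0 g0; lra.
pose u := a / sin a.
have u1 : 1 <= u by rewrite /u ler_pdivlMr // mul1r; exact: ltW (sin_lt_self a0).
have ug : u <= g^-1.
  rewrite /u ler_pdivrMr // -[leLHS](mulKf (lt0r_neq0 g0)).
  by rewrite ler_pM2l ?invr_gt0 // mulrC.
have -> : damping rho (rho * sin al - al) a = u / rho.
  by rewrite /damping c0 subr0 /u; field; rewrite !gt_eqF.
have -> : rho * (u / rho) = u by field; rewrite gt_eqF.
have lnu : ln u <= - ln g by rewrite -lnV ?posrE // ler_ln ?posrE ?invr_gt0 //; lra.
have -> : ln (u / rho) = ln u - ln rho by rewrite ln_div // posrE; lra.
rewrite ca -/K.
have : g <= u * g by rewrite -[leLHS]mul1r ler_pM2r.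
lra.
Qed.

(* Boundary case c = 0: take phi = 0 when the level K is reached by
   x |-> x + rho e^{-x} on (0, +oo), i.e. when K > rho or K >= ln rho + 1 (its
   minimum, at x = ln rho); otherwise rho > 1 and the previous lemma applies. *)
Lemma polar_system_c_zero (rho s al : R) : 0 < rho -> 0 < s ->
  rho * sin al - al = 0 -> polar_system_solvable rho s al.
Proof.
set K := s + rho * cos al.
move=> r0 s0 c0.
have phi0 x : 0 < x -> x + rho * expR (- x) = K -> polar_system_solvable rho s al.
  by move=> x0 ex; exists x, 0; rewrite sin0 cos0 mulr0 mulr1 subr0 c0.
have at0 : 0 + rho * expR (- 0) = rho by rewrite oppr0 expR0 mulr1 add0r.
have [rK|Kr] := ltrP rho K.
  have [x x0 ex] := @x_plus_Cexp_root R rho K 0 (lexx 0)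
    ltac:(rewrite at0; lra) ltac:(right; rewrite at0; lra).
  exact: phi0 ex.
have r1 : 1 < rho.
  rewrite ltNge; apply/negP => r1.
  have al0 := sin_fixed_point_small r0 r1 ltac:(lra).
  by move: Kr; rewrite /K al0 cos0 mulr1; lra.
have [lK|Kl] := lerP (ln rho + 1) K; last exact: polar_system_c_zero_large_rho.
have lr0 : 0 < ln rho by rewrite ln_gt0.
have at_ln : ln rho + rho * expR (- ln rho) = ln rho + 1.
  by rewrite expRN lnK ?posrE // divff // gt_eqF.
have [x x0 ex] := @x_plus_Cexp_root R rho K (ln rho) (ltW lr0)
  ltac:(rewrite at_ln; lra) ltac:(left; lra).
exact: phi0 ex.
Qed.

Lemma polar_system_normalized (rho s al : R) : 0 < rho -> 0 < s ->
  0 <= rho * sin al - al <= pi -> polar_system_solvable rho s al.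
Proof.
move=> r0 s0 /andP[c0 cpi].
have [/eqP c_zero|c_nz] := boolP (rho * sin al - al == 0); first exact: polar_system_c_zero.
have [/eqP c_pi|c_npi] := boolP (rho * sin al - al == pi); first exact: polar_system_c_pi.
by apply: polar_system_interior => //; rewrite !lt_neqAle eq_sym c_nz c_npi c0 cpi.
Qed.

Lemma polar_system_shift (rho s al : R) (k : int) :
  polar_system_solvable rho s (al + 2 * pi * k%:~R) -> polar_system_solvable rho s al.
Proof.
have sinP y : sin (y + 2 * pi * k%:~R) = sin y by apply: periodic_int; exact: sinD2pi.
have cosP y : cos (y + 2 * pi * k%:~R) = cos y by apply: periodic_int; exact: cosD2pi.
case=> x [phi [x0 e1 e2]]; exists x, (phi + 2 * pi * k%:~R).
by rewrite sinP cosP; split => //; move: e1 e2; rewrite sinP cosP; lra.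
Qed.

Lemma polar_system_reflect (rho s al : R) :
  polar_system_solvable rho s (- al) -> polar_system_solvable rho s al.
Proof.
case=> x [phi [x0 e1 e2]]; exists x, (- phi).
by rewrite sinN cosN; split => //; move: e1 e2; rewrite sinN cosN; lra.
Qed.

(* The real system always has a solution: shifting al by a multiple of 2 pi
   brings c = rho sin al - al into [-pi, pi), and a reflection into [0, pi]. *)
Lemma polar_system_always_solvable (rho s al : R) : 0 < rho -> 0 < s ->
  polar_system_solvable rho s al.
Proof.
move=> r0 s0; set c := rho * sin al - al; have pi0 := pi_gt0 R.
pose k := Num.floor ((c + pi) / (2 * pi)).
have k_le : 2 * pi * k%:~R <= c + pi.
  by rewrite mulrC -ler_pdivlMr ?mulr_gt0 //; apply: real_floor_le; exact: num_real.
have k_gt : c + pi < 2 * pi * (k%:~R + 1).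
  have : (c + pi) / (2 * pi) < (k + 1)%:~R by apply: real_floorD1_gt; exact: num_real.
  by rewrite intrD => h; rewrite mulrC -ltr_pdivrMr ?mulr_gt0.
apply: (polar_system_shift (k := k)).
have sinP : sin (al + 2 * pi * k%:~R) = sin al by apply: periodic_int; exact: sinD2pi.
have [cn|cp] := ltrP (c - 2 * pi * k%:~R) 0.
  apply/polar_system_reflect/polar_system_normalized => //.
  by rewrite sinN sinP; apply/andP; split; rewrite /c in cn k_le k_gt *; lra.
apply: polar_system_normalized => //.
by rewrite sinP; apply/andP; split; rewrite /c in cp k_le k_gt *; lra.
Qed.

End DelaySystem.

(* Commuting matrices over an algebraically closed field have a common
   eigenvector inside any eigenspace of the first one, since that eigenspace
   is stable under the second. *)
Lemma common_eigenvector (C : numClosedFieldType) n (A B : 'M[C]_n) a :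
  A *m B = B *m A -> eigenvalue A a ->
  exists v : 'rV_n, exists mu, [/\ v != 0, v *m A = a *: v & v *m B = mu *: v].
Proof.
move=> AB ea.
pose W := row_base (eigenspace A a).
have sWB : stablemx W B by rewrite stablemx_row_base; exact: comm_mx_stable_eigenspace.
have rW : (0 < \rank (eigenspace A a))%N by rewrite lt0n mxrank_eq0.
have [mu /eigenvalueP [w wB wnz]] := eigenvalue_closed (conjmx W B) rW.
exists (w *m W), mu; split.
- by rewrite mulmx_free_eq0 ?row_base_free.
- by apply/eigenspaceP; apply: mulmx_sub; rewrite /W eq_row_base.
- have e : W *m B = conjmx W B *m W by rewrite /conjmx mulmxKpV.
  by rewrite -mulmxA e mulmxA wB scalemxAl.
Qed.

Local Open Scope complex_scope.

Section ScalarEquation.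
Variable R : realType.

(* The scalar characteristic equation  l - l0 = (1 - e^{-lT}) mu  with
   l0 = lams + 2 pi n i / T, lams > 0, has a root with Re l > 0.  Writing
   mu T = rho e^{i al} and l T = x + i (2 pi n + phi + al), it is the real
   system solved by polar_system_always_solvable. *)
Lemma scalar_char_root (T lams : R) (n : int) (mu : R[i]) : 0 < T -> 0 < lams ->
  exists l : R[i], 0 < complex.Re l /\
    l - (lams +i* (2 * pi * n%:~R / T)) - (1 - cexp (- (l * T%:C))) * mu = 0.
Proof.
move=> T0 l0; have Tn : T != 0 by rewrite gt_eqF.
case: mu => mr mi.
have [/andP[/eqP -> /eqP ->]|nz] := boolP ((mr == 0) && (mi == 0)).
  exists (lams +i* (2 * pi * n%:~R / T)); split => //.
  by rewrite subrr sub0r complexr0 mulr0 oppr0.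
have nzT : (mr * T != 0) || (mi * T != 0).
  by move: nz; rewrite negb_and !mulf_eq0 (negbTE Tn) !orbF.
have [rho [al [r0 ea eb]]] := polar_form nzT.
have [x [phi [x0 e1 e2]]] := polar_system_always_solvable al r0 (mulr_gt0 l0 T0).
pose th := phi + al.
exists ((x / T) +i* (2 * pi * n%:~R / T + th / T)); split; first by rewrite /= divr_gt0.
have -> : - (((x / T) +i* (2 * pi * n%:~R / T + th / T)) * T%:C) =
    (- x) +i* (- (th + 2 * pi * n%:~R)).
  by apply/eqP; rewrite eq_complex /=; apply/andP; split; apply/eqP; field.
rewrite /cexp /= cosN sinN (periodic_int _ _ (@cosD2pi R)) (periodic_int _ _ (@sinD2pi R)).
have cphi : cos phi = cos th * cos al + sin th * sin al by rewrite -cosB /th addrK.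
have sphi : sin phi = sin th * cos al - cos th * sin al by rewrite -sinB /th addrK.
rewrite cphi in e2; rewrite sphi in e1.
have mrE : mr = rho * cos al / T by rewrite -ea; field.
have miE : mi = rho * sin al / T by rewrite -eb; field.
apply/eqP; rewrite eq_complex /=; apply/andP; split; apply/eqP.
  have -> : x / T - lams -
    ((1 - expR (- x) * cos th) * mr - (0 - expR (- x) * - sin th) * mi) =
    (x + rho * expR (- x) * (cos th * cos al + sin th * sin al)
      - (lams * T + rho * cos al)) / T by rewrite mrE miE; field.
  by rewrite e2 subrr mul0r.
have -> : 2 * pi * n%:~R / T + th / T - 2 * pi * n%:~R / T -
  ((1 - expR (- x) * cos th) * mi + (0 - expR (- x) * - sin th) * mr) =
  (phi - rho * expR (- x) * (sin th * cos al - cos th * sin al)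
    - (rho * sin al - al)) / T by rewrite mrE miE /th; field.
by rewrite e1 subrr mul0r.
Qed.

End ScalarEquation.

(* On a common eigenvector v of the Jacobian at xs (eigenvalue lams + 2 pi n i / T) and K
   (eigenvalue mu), the characteristic matrix acts as the scalar
   l - l0 - (1 - e^{-lT}) mu, which vanishes at the root given by
   scalar_char_root; so the characteristic determinant vanishes there. *)
Unset Implicit Arguments.

Theorem corollary5 (R : realType) (N : nat) (f : 'rV[R]_N -> 'rV[R]_N)
  (xs : 'rV[R]_N) (T : R) (lams : R) (n : int) (K : 'M[R]_N) :
  C1 f -> f xs = 0 -> 0 < T -> 0 < lams ->
  eigenvalue (cmx (jac f xs)) (lams +i* (2 * pi * n%:~R / T)) ->
  eigenvalue (cmx (jac f xs)) (lams +i* (- (2 * pi * n%:~R / T))) ->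
  jac f xs *m K = K *m jac f xs ->
  exists l : R[i], 0 < complex.Re l /\ charfun (jac f xs) K T l = 0.
Proof.
move=> _ _ T0 l0 eig _ comm.
have ccomm : cmx (jac f xs) *m cmx K = cmx K *m cmx (jac f xs).
  by rewrite /cmx -!map_mxM comm.
have [v [mu [vnz vA vK]]] := common_eigenvector ccomm eig.
have [l [lpos root]] := scalar_char_root n mu T0 l0.
exists l; split => //; apply/eqP/det0P; exists v => //.
rewrite !mulmxBr mul_mx_scalar vA -scalemxAr vK scalerA -!scalerBl.
by rewrite root scale0r.
Qed.
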